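(* Let $W$ be a nonempty closed subset of $\mathbb{R}$, $n$ a positive integer, $\alpha_1,\dots,\alpha_n\in\mathrm{Aut}(W)$, and $G=\langle\alpha_1,\dots,\alpha_n\rangle$. Suppose $G$ contains no nonabelian free subsemigroup. If $\mathrm{Fix}_W(\alpha_i)\ne\emptyset$ for all $i$, then $\mathrm{Fix}_W(G)\ne\emptyset$.
   Context: $\mathrm{Aut}(W)$ is the group of order preserving bijections of $W$ (with the order induced from $\mathbb{R}$). For a subset $S$ of a group acting on $W$, $\mathrm{Fix}_W(S)$ is the set of points of $W$ fixed by every element of $S$. *)

From Stdlib Require Export Reals Rtopology List.
Open Scope R_scope.

Definition pt (W : R -> Prop) : Type := {x : R | W x}.

Definition is_aut (W : R -> Prop) (f : pt W -> pt W) : Prop :=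
  (exists g : pt W -> pt W,
      (forall x, g (f x) = x) /\ (forall y, f (g y) = y)) /\
  (forall x y : pt W, proj1_sig x <= proj1_sig y ->
                      proj1_sig (f x) <= proj1_sig (f y)).

(* The subgroup of Sym(W) generated by alpha 0, ..., alpha (n-1). *)
Inductive in_gen (W : R -> Prop) (n : nat) (alpha : nat -> pt W -> pt W)
  : (pt W -> pt W) -> Prop :=
| gen_base : forall i, (i < n)%nat -> in_gen W n alpha (alpha i)
| gen_id : in_gen W n alpha (fun x => x)
| gen_comp : forall f g, in_gen W n alpha f -> in_gen W n alpha g ->
    in_gen W n alpha (fun x => f (g x))
| gen_inv : forall f h, in_gen W n alpha f ->
    (forall x, h (f x) = x) -> (forall x, f (h x) = x) ->
    in_gen W n alpha h.

Fixpoint word_eval {W : R -> Prop} (a b : pt W -> pt W) (w : list bool)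
  : pt W -> pt W :=
  match w with
  | nil => fun x => x
  | c :: w' => fun x => (if c then a else b) (word_eval a b w' x)
  end.

(* G contains a nonabelian free subsemigroup: two elements a, b of G
   such that distinct nonempty words in a, b give distinct elements
   (equivalently, a free subsemigroup of rank >= 2). *)
Definition has_nonab_free_subsemigroup (W : R -> Prop) (n : nat)
  (alpha : nat -> pt W -> pt W) : Prop :=
  exists a b, in_gen W n alpha a /\ in_gen W n alpha b /\
    forall w1 w2 : list bool, w1 <> nil -> w2 <> nil ->
      word_eval a b w1 = word_eval a b w2 -> w1 = w2.

(* Argue by induction on the number of generators.  If the common fixed points of
   alpha_1, ..., alpha_m and the fixed points of alpha_(m+1) were disjoint, closedness of W
   would give a point c fixed by one automorphism f and a point b fixed by another one g such
   that f moves b and g has no fixed point between c and b.  After replacing f and g by their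
   inverses if necessary, the orbit of c under g escapes past f b (otherwise its supremum would
   be a fixed point of g in between), so that suitable powers of f and g play ping-pong on the
   two ends of [c, b] and generate a free semigroup. *)

From Stdlib Require Import Classical FunctionalExtensionality Lra Lia.

Definition ptval {W : R -> Prop} (x : pt W) : R := proj1_sig x.
Coercion ptval : pt >-> R.

Section Automorphisms.
Context {W : R -> Prop}.
Implicit Types (x y : pt W) (f g : pt W -> pt W).

Lemma ptval_inj x y : ptval x = ptval y -> x = y.
Proof.
  destruct x as [x Hx], y as [y Hy]; unfold ptval; simpl; intros ->.
  f_equal; apply proof_irrelevance.
Qed.

Definition nondecreasing f := forall x y, x <= y -> f x <= f y.

Definition aut_with_inverse f g :=
  (forall x, g (f x) = x) /\ (forall y, f (g y) = y) /\ nondecreasing f /\ nondecreasing g.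

Lemma aut_with_inverse_sym f g : aut_with_inverse f g -> aut_with_inverse g f.
Proof. intros (fK & gK & fM & gM); repeat split; assumption. Qed.

Lemma is_aut_inverse f : is_aut W f -> exists g, aut_with_inverse f g.
Proof.
  intros [[g [fK gK]] fM]; exists g; repeat split; try assumption.
  intros x y Hxy; destruct (Rle_or_lt (g x) (g y)) as [|Hlt]; [assumption|].
  exfalso; pose proof (fM _ _ (Rlt_le _ _ Hlt)) as H; unfold ptval in *.
  rewrite !gK in H; assert (x = y) as -> by (apply ptval_inj; unfold ptval; lra); lra.
Qed.

Lemma aut_lt f g : aut_with_inverse f g -> forall x y, x < y -> f x < f y.
Proof.
  intros (fK & _ & fM & _) x y Hxy.
  destruct (Rle_lt_or_eq_dec _ _ (fM x y (Rlt_le _ _ Hxy))) as [|E]; [assumption|].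
  apply ptval_inj, (f_equal g) in E; rewrite !fK in E; subst; lra.
Qed.

Lemma lt_of_le_fixed f x y : x <= y -> f x <> x -> f y = y -> x < y.
Proof.
  intros Hxy Hx Hy; destruct (Rle_lt_or_eq_dec _ _ Hxy) as [|E]; [assumption|].
  apply ptval_inj in E; subst; contradiction.
Qed.

Lemma aut_fixed_iff f g : aut_with_inverse f g -> forall x, g x = x <-> f x = x.
Proof.
  intros (fK & gK & _) x; split; intros E.
  - rewrite <- E at 1; apply gK.
  - rewrite <- E at 1; apply fK.
Qed.

Lemma iter_nondecreasing k f : nondecreasing f -> nondecreasing (Nat.iter k f).
Proof. intros fM; induction k; intros x y Hxy; simpl; auto. Qed.

Lemma iter_fixed k f x : f x = x -> Nat.iter k f x = x.
Proof. intros E; apply Nat.iter_invariant with (Inv := fun y => y = x); congruence. Qed.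

Lemma iter_le k f x : nondecreasing f -> f x <= x -> Nat.iter k f x <= x.
Proof.
  intros fM Hx; apply Nat.iter_invariant with (Inv := fun y => y <= x); [|lra].
  intros y Hy; pose proof (fM _ _ Hy); lra.
Qed.

Lemma iter_ge k f x : nondecreasing f -> x <= f x -> x <= Nat.iter k f x.
Proof.
  intros fM Hx; apply Nat.iter_invariant with (Inv := fun y => x <= y); [|lra].
  intros y Hy; pose proof (fM _ _ Hy); lra.
Qed.

Lemma iter_le_succ k f x : nondecreasing f -> x <= f x -> Nat.iter k f x <= Nat.iter (S k) f x.
Proof. intros fM Hx; induction k; simpl; auto. Qed.

Lemma iter_inj k f g : (forall x, g (f x) = x) ->
  forall x y, Nat.iter k f x = Nat.iter k f y -> x = y.
Proof.
  intros fK; induction k; simpl; intros x y E; [assumption|].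
  apply IHk; rewrite <- (fK (Nat.iter k f x)), <- (fK (Nat.iter k f y)), E; reflexivity.
Qed.

End Automorphisms.

Section Completeness.
Variable W : R -> Prop.
Hypothesis HW : closed_set W.
Implicit Types (x y q : pt W) (f g : pt W -> pt W) (P : pt W -> Prop).

Definition is_lub_pt P (L : pt W) :=
  (forall x, P x -> x <= L) /\ (forall M, (forall x, P x -> x <= M) -> L <= M).

Definition is_glb_pt P (L : pt W) :=
  (forall x, P x -> L <= x) /\ (forall M, (forall x, P x -> M <= x) -> M <= L).

Lemma closed_adherent m :
  (forall eps, 0 < eps -> exists r, W r /\ Rabs (r - m) < eps) -> W m.
Proof.
  intros Happrox; apply NNPP; intros Hm.
  destruct (HW m Hm) as [d Hd].
  destruct (Happrox d (cond_pos d)) as [r [Hr Hrm]].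
  exact (Hd r Hrm Hr).
Qed.

Lemma lub_pt_exists P x0 (M : R) :
  P x0 -> (forall x, P x -> x <= M) -> exists L, is_lub_pt P L.
Proof.
  intros Px0 HM.
  set (E := fun r => exists x, P x /\ ptval x = r).
  destruct (completeness E) as [m [Hub Hleast]].
  { exists M; intros r [x [Px <-]]; auto. }
  { exists x0, x0; auto. }
  assert (Wm : W m).
  { apply closed_adherent; intros eps Heps.
    destruct (classic (exists x, P x /\ m - eps < x)) as [[x [Px Hx]]|Hnone].
    - exists (proj1_sig x); split; [apply proj2_sig|].
      assert (x <= m) by (apply Hub; exists x; auto).
      unfold ptval in *; apply Rabs_def1; lra.
    - assert (m <= m - eps); [|lra].
      apply Hleast; intros r [x [Px <-]]; apply Rnot_lt_le; eauto. }
  exists (exist _ m Wm); split.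
  - intros x Px; apply Hub; exists x; auto.
  - intros M' HM'; apply Hleast; intros r [x [Px <-]]; auto.
Qed.

Lemma glb_pt_exists P x0 (M : R) :
  P x0 -> (forall x, P x -> M <= x) -> exists L, is_glb_pt P L.
Proof.
  intros Px0 HM.
  set (E := fun r => exists x, P x /\ - ptval x = r).
  destruct (completeness E) as [m [Hub Hleast]].
  { exists (- M); intros r [x [Px <-]]; pose proof (HM x Px); lra. }
  { exists (- ptval x0), x0; auto. }
  assert (Wm : W (- m)).
  { apply closed_adherent; intros eps Heps.
    destruct (classic (exists x, P x /\ x < - m + eps)) as [[x [Px Hx]]|Hnone].
    - exists (proj1_sig x); split; [apply proj2_sig|].
      assert (- ptval x <= m) by (apply Hub; exists x; auto).
      unfold ptval in *; apply Rabs_def1; lra.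
    - assert (m <= m - eps); [|lra].
      apply Hleast; intros r [x [Px <-]].
      assert (~ x < - m + eps) by eauto; lra. }
  exists (exist _ (- m) Wm); split.
  - intros x Px; assert (- ptval x <= m) by (apply Hub; exists x; auto).
    unfold ptval in *; simpl; lra.
  - intros M' HM'; assert (m <= - M'); [|unfold ptval; simpl; lra].
    apply Hleast; intros r [x [Px <-]]; pose proof (HM' x Px); lra.
Qed.

(* If [L < f L], then [g L < L] is no upper bound of [P], and [f] maps a point of [P] above
   [g L] to a point of [P] above [L]. *)
Lemma lub_fixed f g P L : aut_with_inverse f g -> is_lub_pt P L ->
  (forall x, P x -> P (f x)) -> (forall x, P x -> x <= f x) -> f L = L.
Proof.
  intros Hf [Hub Hleast] Hinv Hinc; pose proof Hf as (fK & gK & fM & _).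
  assert (HL : L <= f L).
  { apply Hleast; intros x Px; pose proof (Hinc x Px); pose proof (fM x L (Hub x Px)); lra. }
  apply ptval_inj; destruct (Rle_lt_or_eq_dec _ _ HL) as [Hlt|]; [exfalso|auto].
  assert (HgL : g L < L).
  { pose proof (aut_lt _ _ (aut_with_inverse_sym _ _ Hf) _ _ Hlt) as H; rewrite fK in H; exact H. }
  destruct (classic (exists x, P x /\ g L < x)) as [[x [Px Hx]]|Hnone].
  - pose proof (aut_lt _ _ Hf _ _ Hx) as H; rewrite gK in H.
    pose proof (Hub _ (Hinv _ Px)); lra.
  - assert (L <= g L); [|lra].
    apply Hleast; intros x Px; apply Rnot_lt_le; eauto.
Qed.

Lemma glb_fixed f g P L : aut_with_inverse f g -> is_glb_pt P L ->
  (forall x, P x -> P (f x)) -> (forall x, P x -> f x <= x) -> f L = L.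
Proof.
  intros Hf [Hlb Hgreatest] Hinv Hdec; pose proof Hf as (fK & gK & fM & _).
  assert (HL : f L <= L).
  { apply Hgreatest; intros x Px; pose proof (Hdec x Px); pose proof (fM L x (Hlb x Px)); lra. }
  apply ptval_inj; destruct (Rle_lt_or_eq_dec _ _ HL) as [Hlt|]; [exfalso|auto].
  assert (HgL : L < g L).
  { pose proof (aut_lt _ _ (aut_with_inverse_sym _ _ Hf) _ _ Hlt) as H; rewrite fK in H; exact H. }
  destruct (classic (exists x, P x /\ x < g L)) as [[x [Px Hx]]|Hnone].
  - pose proof (aut_lt _ _ Hf _ _ Hx) as H; rewrite gK in H.
    pose proof (Hlb _ (Hinv _ Px)); lra.
  - assert (g L <= L); [|lra].
    apply Hgreatest; intros x Px; apply Rnot_lt_le; eauto.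
Qed.

Definition fixed_by (S : (pt W -> pt W) -> Prop) x := forall f, S f -> f x = x.

Lemma fixed_by_eq h x : fixed_by (eq h) x <-> h x = x.
Proof. split; [intros Hx; apply Hx; reflexivity|intros Hx f <-; exact Hx]. Qed.

Section Extremal.
Variable S : (pt W -> pt W) -> Prop.
Hypothesis HS : forall f, S f -> exists g, aut_with_inverse f g.

Lemma least_fixed_above x q : x <= q -> fixed_by S q ->
  exists b, fixed_by S b /\ x <= b /\ forall y, x <= y -> fixed_by S y -> b <= y.
Proof.
  intros Hxq Hq; set (P := fun y => x <= y /\ fixed_by S y).
  destruct (glb_pt_exists P q x) as [b Hb]; [split; auto|intros y [Hy _]; auto|].
  exists b; split; [|split].
  - intros f Sf; destruct (HS f Sf) as [g Hg].
    apply (glb_fixed f g P b Hg Hb); intros y [Hy Fy]; rewrite (Fy f Sf); [split; auto|lra].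
  - apply (proj2 Hb); intros y [Hy _]; auto.
  - intros y Hy Fy; apply (proj1 Hb); split; auto.
Qed.

Lemma greatest_fixed_below x q : q <= x -> fixed_by S q ->
  exists b, fixed_by S b /\ b <= x /\ forall y, y <= x -> fixed_by S y -> y <= b.
Proof.
  intros Hqx Hq; set (P := fun y => y <= x /\ fixed_by S y).
  destruct (lub_pt_exists P q x) as [b Hb]; [split; auto|intros y [Hy _]; auto|].
  exists b; split; [|split].
  - intros f Sf; destruct (HS f Sf) as [g Hg].
    apply (lub_fixed f g P b Hg Hb); intros y [Hy Fy]; rewrite (Fy f Sf); [split; auto|lra].
  - apply (proj2 Hb); intros y [Hy _]; auto.
  - intros y Hy Fy; apply (proj1 Hb); split; auto.
Qed.

End Extremal.

(* The supremum of a bounded forward orbit would be a fixed point. *)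
Lemma iter_escapes f g (c : pt W) (M : R) : aut_with_inverse f g -> c <= f c ->
  (forall y, c <= y -> y <= M -> f y <> y) -> exists N, M < Nat.iter N f c.
Proof.
  intros Hf Hc Hnofix; pose proof Hf as (_ & _ & fM & _).
  apply NNPP; intros Hbounded.
  set (P := fun y => exists k, y = Nat.iter k f c).
  destruct (lub_pt_exists P c M) as [L HL].
  { exists 0%nat; reflexivity. }
  { intros y [k ->]; apply Rnot_lt_le; eauto. }
  apply (Hnofix L).
  - apply (proj1 HL); exists 0%nat; reflexivity.
  - apply (proj2 HL); intros y [k ->]; apply Rnot_lt_le; eauto.
  - apply (lub_fixed f g P L Hf HL).
    + intros y [k ->]; exists (S k); reflexivity.
    + intros y [k ->]; apply iter_le_succ; assumption.
Qed.

End Completeness.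

Definition free_pair {W : R -> Prop} (u v : pt W -> pt W) : Prop :=
  forall w1 w2 : list bool, w1 <> nil -> w2 <> nil ->
    word_eval u v w1 = word_eval u v w2 -> w1 = w2.

Section PingPong.
Variable W : R -> Prop.
Variables (u v : pt W -> pt W) (D A B : pt W -> Prop).
Hypotheses (u_inj : forall x y, u x = u y -> x = y) (v_inj : forall x y, v x = v y -> x = y).
Hypotheses (uD : forall x, D x -> A (u x)) (vD : forall x, D x -> B (v x)).
Hypotheses (AD : forall x, A x -> D x) (BD : forall x, B x -> D x).
Hypothesis AB_disjoint : forall x, A x -> B x -> False.
Variables (a0 b0 : pt W).
Hypotheses (Aa0 : A a0) (Bb0 : B b0).

Let target (c : bool) := if c then A else B.

Lemma word_eval_lands c w x : D x -> target c (word_eval u v (c :: w) x).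
Proof.
  assert (Dw : forall w' y, D y -> D (word_eval u v w' y))
    by (induction w' as [|[] w' IH]; simpl; auto).
  destruct c; simpl; auto.
Qed.

Lemma word_eval_nonempty_not_id w : w <> nil -> word_eval u v w <> (fun x => x).
Proof.
  destruct w as [|c w]; [congruence|]; intros _ E.
  destruct c.
  - pose proof (word_eval_lands true w b0 (BD _ Bb0)) as H; rewrite E in H; eauto.
  - pose proof (word_eval_lands false w a0 (AD _ Aa0)) as H; rewrite E in H; eauto.
Qed.

Lemma free_pair_of_pingpong : free_pair u v.
Proof.
  intros w1; induction w1 as [|c1 w1 IH]; intros w2 H1 H2 E; [congruence|].
  destruct w2 as [|c2 w2]; [congruence|].
  destruct (Bool.bool_dec c1 c2) as [<-|Hne].
  - assert (Etail : word_eval u v w1 = word_eval u v w2).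
    { apply functional_extensionality; intros x.
      apply (f_equal (fun F => F x)) in E; simpl in E.
      destruct c1; [apply u_inj|apply v_inj]; exact E. }
    destruct w1 as [|d1 w1], w2 as [|d2 w2]; try reflexivity.
    + exfalso; apply (word_eval_nonempty_not_id (d2 :: w2)); [discriminate|auto].
    + exfalso; apply (word_eval_nonempty_not_id (d1 :: w1)); [discriminate|auto].
    + f_equal; apply IH; [discriminate|discriminate|exact Etail].
  - exfalso; apply (f_equal (fun F => F a0)) in E.
    pose proof (word_eval_lands c1 w1 a0 (AD _ Aa0)) as L1.
    pose proof (word_eval_lands c2 w2 a0 (AD _ Aa0)) as L2.
    rewrite E in L1; destruct c1, c2; simpl in *; eauto; congruence.
Qed.

End PingPong.

(* Ping-pong on [c, b]: the powers of f squeeze [c, b] into [c, f^N b] and those of g into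
   [g^N c, b], which are disjoint once the g-orbit of c has passed f b. *)
Lemma free_iterates_of_crossing W (HW : closed_set W) f fi g gi (c b : pt W) :
  aut_with_inverse f fi -> aut_with_inverse g gi -> c < b ->
  f c = c -> f b < b -> g b = b -> c <= g c ->
  (forall y : pt W, c <= y -> y < b -> g y <> y) ->
  exists N, free_pair (Nat.iter N f) (Nat.iter N g).
Proof.
  intros Hf Hg Hcb fc fb gb gc Hnofix.
  pose proof Hf as (fK & _ & fM & _); pose proof Hg as (gK & _ & gM & _).
  destruct (iter_escapes W HW g gi c (f b) Hg gc) as [N HN].
  { intros y Hy1 Hy2; apply Hnofix; lra. }
  exists (S N).
  set (K := S N).
  assert (Hsep : Nat.iter K f b < Nat.iter K g c).
  { pose proof (fM _ _ (iter_le N f b fM (Rlt_le _ _ fb))).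
    pose proof (iter_le_succ N g c gM gc); simpl in *; lra. }
  pose proof (iter_nondecreasing K f fM) as fKM.
  pose proof (iter_nondecreasing K g gM) as gKM.
  pose proof (iter_fixed K f c fc) as fKc; pose proof (iter_fixed K g b gb) as gKb.
  pose proof (iter_le K f b fM (Rlt_le _ _ fb)) as fKb.
  pose proof (iter_ge K g c gM gc) as gKc.
  apply (free_pair_of_pingpong W _ _ (fun x => c <= x <= b)
     (fun x => c <= x <= Nat.iter K f b) (fun x => Nat.iter K g c <= x <= b))
     with (a0 := c) (b0 := b).
  - apply (iter_inj K f fi fK).
  - apply (iter_inj K g gi gK).
  - intros x [Hx1 Hx2]; split; [rewrite <- fKc at 1; apply fKM; lra|apply fKM; lra].
  - intros x [Hx1 Hx2]; split; [apply gKM; lra|rewrite <- gKb; apply gKM; lra].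
  - intros x [Hx1 Hx2]; split; lra.
  - intros x [Hx1 Hx2]; split; lra.
  - intros x [Hx1 Hx2] [Hx3 Hx4]; lra.
  - pose proof (fKM c b (Rlt_le _ _ Hcb)) as H; rewrite fKc in H; split; lra.
  - pose proof (gKM c b (Rlt_le _ _ Hcb)) as H; rewrite gKb in H; split; lra.
Qed.

Section Generators.
Variable W : R -> Prop.
Hypothesis HW : closed_set W.
Variables (n : nat) (alpha : nat -> pt W -> pt W).
Hypothesis alpha_aut : forall i, (i < n)%nat -> exists g, aut_with_inverse (alpha i) g.
Hypothesis no_free : ~ has_nonab_free_subsemigroup W n alpha.
Implicit Types (x y q b c : pt W) (f g : pt W -> pt W).

Lemma in_gen_iter k f : in_gen W n alpha f -> in_gen W n alpha (Nat.iter k f).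
Proof. intros Hf; induction k; [apply gen_id|apply (gen_comp _ _ _ _ _ Hf IHk)]. Qed.

Lemma in_gen_lower f fi x : in_gen W n alpha f -> aut_with_inverse f fi -> f x <> x ->
  exists h hi, in_gen W n alpha h /\ aut_with_inverse h hi /\
    (forall y, h y = y <-> f y = y) /\ h x < x.
Proof.
  intros If Hf Hx; pose proof Hf as (fK & fiK & _).
  destruct (Rtotal_order (f x) x) as [Hlt|[Heq|Hgt]].
  - exists f, fi; split; [|split; [|split]]; tauto.
  - exfalso; apply Hx, ptval_inj, Heq.
  - exists fi, f; split; [|split; [|split]].
    + apply (gen_inv _ _ _ f fi If fK fiK).
    + apply aut_with_inverse_sym, Hf.
    + apply (aut_fixed_iff f fi Hf).
    + pose proof (aut_lt _ _ (aut_with_inverse_sym _ _ Hf) _ _ Hgt) as H; rewrite fK in H; exact H.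
Qed.

Lemma in_gen_raise g gi x : in_gen W n alpha g -> aut_with_inverse g gi -> g x <> x ->
  exists h hi, in_gen W n alpha h /\ aut_with_inverse h hi /\
    (forall y, h y = y <-> g y = y) /\ x < h x.
Proof.
  intros Ig Hg Hx; destruct (in_gen_lower g gi x Ig Hg Hx) as (h & hi & Ih & Hh & Eh & Hhx).
  pose proof Hh as (hK & hiK & _).
  exists hi, h; split; [|split; [|split]].
  - apply (gen_inv _ _ _ h hi Ih hK hiK).
  - apply aut_with_inverse_sym, Hh.
  - intros y; rewrite (aut_fixed_iff h hi Hh); apply Eh.
  - pose proof (aut_lt _ _ (aut_with_inverse_sym _ _ Hh) _ _ Hhx) as H; rewrite hK in H; exact H.
Qed.

Lemma nonab_free_of_crossing f fi g gi c b :
  in_gen W n alpha f -> in_gen W n alpha g ->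
  aut_with_inverse f fi -> aut_with_inverse g gi -> c < b ->
  f c = c -> f b <> b -> g b = b -> (forall y, c <= y -> y < b -> g y <> y) ->
  has_nonab_free_subsemigroup W n alpha.
Proof.
  intros If Ig Hf Hg Hcb fc fb gb Hnofix.
  destruct (in_gen_lower f fi b If Hf fb) as (f' & fi' & If' & Hf' & Ef & Hf'b).
  assert (gc : g c <> c) by (apply Hnofix; lra).
  destruct (in_gen_raise g gi c Ig Hg gc) as (g' & gi' & Ig' & Hg' & Eg & Hg'c).
  destruct (free_iterates_of_crossing W HW f' fi' g' gi' c b) as [N HN]; auto.
  - apply Ef, fc.
  - apply Eg, gb.
  - lra.
  - intros y Hy1 Hy2 E; apply (Hnofix y Hy1 Hy2), Eg, E.
  - exists (Nat.iter N f'), (Nat.iter N g'); repeat split; auto using in_gen_iter.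
Qed.

Definition first_gens (m : nat) f := exists i, (i < m)%nat /\ f = alpha i.

Lemma first_gens_aut m : (m <= n)%nat -> forall f, first_gens m f -> exists g, aut_with_inverse f g.
Proof. intros Hm f [i [Hi ->]]; apply alpha_aut; lia. Qed.

Lemma fixed_by_first_gens_S m x :
  fixed_by W (first_gens m) x -> alpha m x = x -> fixed_by W (first_gens (S m)) x.
Proof.
  intros Hx Hm f [i [Hi ->]].
  destruct (Nat.eq_dec i m) as [->|Hne]; [exact Hm|apply Hx; exists i; split; [lia|reflexivity]].
Qed.

Lemma not_fixed_by_first_gens m x : ~ fixed_by W (first_gens m) x ->
  exists i, (i < m)%nat /\ alpha i x <> x.
Proof.
  intros Hx; apply NNPP; intros Hnone; apply Hx; intros f [i [Hi ->]].
  apply NNPP; intros Hi'; apply Hnone; eauto.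
Qed.

Lemma single_gen_aut m : (m < n)%nat -> forall f, eq (alpha m) f -> exists g, aut_with_inverse f g.
Proof. intros Hm f <-; apply alpha_aut, Hm. Qed.

Section Step.
Variables (m : nat) (Hm : (m < n)%nat).
Hypothesis disjoint : forall x, fixed_by W (first_gens m) x -> alpha m x <> x.

Lemma nonab_free_of_disjoint_below p q :
  fixed_by W (first_gens m) p -> alpha m q = q -> p < q -> has_nonab_free_subsemigroup W n alpha.
Proof.
  intros Hp Hq Hpq; destruct (alpha_aut m Hm) as [gm Hgm].
  destruct (greatest_fixed_below W HW _ (first_gens_aut m ltac:(lia)) q p (Rlt_le _ _ Hpq) Hp)
    as (a & Ha & Haq & Hamax).
  destruct (least_fixed_above W HW _ (single_gen_aut m Hm) a q Haq (proj2 (fixed_by_eq W _ _) Hq))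
    as (b & Hb & Hab & Hbmin).
  apply fixed_by_eq in Hb.
  assert (Hbq : b <= q) by (apply Hbmin; [exact Haq|apply fixed_by_eq, Hq]).
  assert (Hab' : a < b) by (apply (lt_of_le_fixed (alpha m)); auto).
  destruct (not_fixed_by_first_gens m b) as [i [Hi Hib]].
  { intros Hfix; pose proof (Hamax b Hbq Hfix); lra. }
  destruct (alpha_aut i ltac:(lia)) as [gi Hgi].
  apply (nonab_free_of_crossing (alpha i) gi (alpha m) gm a b); auto.
  - apply gen_base; lia.
  - apply gen_base; exact Hm.
  - apply Ha; exists i; auto.
  - intros y Hy1 Hy2 Hy; pose proof (Hbmin y Hy1 (proj2 (fixed_by_eq W _ _) Hy)); lra.
Qed.

Lemma nonab_free_of_disjoint_above p q :
  fixed_by W (first_gens m) p -> alpha m q = q -> q < p -> has_nonab_free_subsemigroup W n alpha.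
Proof.
  intros Hp Hq Hqp; destruct (alpha_aut m Hm) as [gm Hgm].
  destruct (least_fixed_above W HW _ (first_gens_aut m ltac:(lia)) q p (Rlt_le _ _ Hqp) Hp)
    as (a & Ha & Hqa & Hamin).
  destruct (greatest_fixed_below W HW _ (single_gen_aut m Hm) a q Hqa (proj2 (fixed_by_eq W _ _) Hq))
    as (b & Hb & Hba & Hbmax).
  apply fixed_by_eq in Hb.
  assert (Hqb : q <= b) by (apply Hbmax; [exact Hqa|apply fixed_by_eq, Hq]).
  assert (Hba' : b < a).
  { apply Rnot_le_lt; intros Hab; pose proof (lt_of_le_fixed (alpha m) a b Hab (disjoint a Ha) Hb); lra. }
  destruct (not_fixed_by_first_gens m b) as [i [Hi Hib]].
  { intros Hfix; pose proof (Hamin b Hqb Hfix); lra. }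
  destruct (alpha_aut i ltac:(lia)) as [gi Hgi].
  (* The gap of [alpha m] below [a] faces the wrong way for a crossing at [b], so the roles are
     swapped: [alpha m] fixes [b] and moves the first fixed point [d] of [alpha i] above [b]. *)
  assert (Hia : alpha i a = a) by (apply Ha; exists i; auto).
  destruct (least_fixed_above W HW _ (single_gen_aut i ltac:(lia)) b a (Rlt_le _ _ Hba')
      (proj2 (fixed_by_eq W _ _) Hia)) as (d & Hd & Hbd & Hdmin).
  apply fixed_by_eq in Hd.
  assert (Hda : d <= a) by (apply Hdmin; [lra|apply fixed_by_eq, Hia]).
  assert (Hbd' : b < d) by (apply (lt_of_le_fixed (alpha i)); auto).
  apply (nonab_free_of_crossing (alpha m) gm (alpha i) gi b d); auto.
  - apply gen_base; exact Hm.
  - apply gen_base; lia.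
  - intros Hmd; pose proof (Hbmax d Hda (proj2 (fixed_by_eq W _ _) Hmd)); lra.
  - intros y Hy1 Hy2 Hy; pose proof (Hdmin y Hy1 (proj2 (fixed_by_eq W _ _) Hy)); lra.
Qed.

End Step.

Lemma first_gens_fixed_step m p q : (m < n)%nat ->
  fixed_by W (first_gens m) p -> alpha m q = q -> exists x, fixed_by W (first_gens (S m)) x.
Proof.
  intros Hm Hp Hq; apply NNPP; intros Hnone.
  assert (disjoint : forall x, fixed_by W (first_gens m) x -> alpha m x <> x).
  { intros x Hx Hmx; apply Hnone; exists x; apply fixed_by_first_gens_S; assumption. }
  apply no_free; destruct (Rtotal_order p q) as [Hpq|[Hpq|Hqp]].
  - apply (nonab_free_of_disjoint_below m Hm disjoint p q); assumption.
  - apply ptval_inj in Hpq; subst; exfalso; exact (disjoint q Hp Hq).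
  - apply (nonab_free_of_disjoint_above m Hm disjoint p q); assumption.
Qed.

End Generators.

Lemma in_gen_fixed W n alpha (x : pt W) :
  (forall i, (i < n)%nat -> alpha i x = x) -> forall g, in_gen W n alpha g -> g x = x.
Proof.
  intros Hx g Hg; induction Hg as [i Hi| |f g _ IHf _ IHg|f h _ IHf hK _]; simpl; auto.
  - rewrite IHg; exact IHf.
  - rewrite <- IHf at 1; apply hK.
Qed.

Theorem lemma4p4 (W : R -> Prop) (HWcl : closed_set W) (HWne : exists x, W x)
  (n : nat) (Hn : (0 < n)%nat) (alpha : nat -> pt W -> pt W)
  (Haut : forall i, (i < n)%nat -> is_aut W (alpha i))
  (Hnofree : ~ has_nonab_free_subsemigroup W n alpha)
  (Hfix : forall i, (i < n)%nat -> exists x : pt W, alpha i x = x) :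
  exists x : pt W, forall g, in_gen W n alpha g -> g x = x.
Proof.
  assert (Hinv : forall i, (i < n)%nat -> exists g, aut_with_inverse (alpha i) g)
    by (intros i Hi; apply is_aut_inverse, Haut, Hi).
  assert (Hcommon : forall m, (m <= n)%nat -> exists x, fixed_by W (first_gens W alpha m) x).
  { induction m as [|m IH]; intros Hm.
    - destruct HWne as [x Hx]; exists (exist _ x Hx); intros f [i [Hi _]]; lia.
    - destruct (IH ltac:(lia)) as [p Hp]; destruct (Hfix m ltac:(lia)) as [q Hq].
      exact (first_gens_fixed_step W HWcl n alpha Hinv Hnofree m p q ltac:(lia) Hp Hq). }
  destruct (Hcommon n (le_n n)) as [x Hx]; exists x.
  apply in_gen_fixed; intros i Hi; apply Hx; exists i; auto.
Qed.
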